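(* Let $A_1,\dots,A_5$ be linearly independent symmetric $5\times5$ complex matrices such that $\tilde X=\{([z],[w])\in\mathbb{P}^4\times\mathbb{P}^4:{}^tzA_iw=0,\ i=1,\dots,5\}$ is a smooth threefold. Let $H=\{[y]\in\mathbb{P}^4:\det(\sum y_iA_i)=0\}$ and $U=\{([y],[w])\in H\times\mathbb{P}^4:(\sum y_iA_i)w=0\}$. Then $U$ is smooth. *)

From HB Require Import structures.
From mathcomp Require Import all_boot all_order all_algebra.
From mathcomp Require Import complex.
From mathcomp Require Import Rstruct.
Set Implicit Arguments. Unset Strict Implicit. Unset Printing Implicit Defensive.
Import GRing.Theory.
Local Open Scope ring_scope.

Definition CC : fieldType := complex Rdefinitions.R.

Section Web.
Variable F : fieldType.
Variable A : 'I_5 -> 'M[F]_5.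

Definition pencil (y : 'cV[F]_5) : 'M[F]_5 := \sum_(i < 5) y i 0 *: A i.

(* Points of X~ (in affine-cone coordinates; all conditions are
   bihomogeneous so they only depend on ([z],[w]) in P^4 x P^4). *)
Definition in_Xt (z w : 'cV[F]_5) : Prop :=
  z != 0 /\ w != 0 /\ forall i, (z^T *m A i *m w) 0 0 = 0.

(* Jacobian (on the affine cone C^5 x C^5) of the 5 defining equations
   f_i(z,w) = z^T A_i w at (z,w): (u,v) |-> (u^T A_i w + z^T A_i v)_i. *)
Definition jac_Xt (z w : 'cV[F]_5) : 'M[F]_(5, 5 + 5) :=
  row_mx (\matrix_(i < 5, j < 5) (A i *m w) j 0)
         (\matrix_(i < 5, j < 5) (z^T *m A i) 0 j).

(* X~ is a smooth threefold: nonempty and at every point the Zariski tangent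
   space of the scheme cut out by the 5 equations has (projective) dimension
   3, i.e. the cone tangent space has dimension 10 - rank = 5 = 3 + 2. *)
Definition Xt_smooth_threefold : Prop :=
  (exists z w, in_Xt z w) /\
  forall z w, in_Xt z w -> \rank (jac_Xt z w) = 5%N.

Definition in_H (y : 'cV[F]_5) : Prop := y != 0 /\ \det (pencil y) = 0.
Definition in_U (y w : 'cV[F]_5) : Prop :=
  in_H y /\ w != 0 /\ pencil y *m w = 0.

(* Jacobian of the defining equations of U inside P^4 x P^4:
   det(sum y_i A_i) = 0 (defining H) and (sum y_i A_i) w = 0.
   d det at y in direction a is tr(adj(pencil y) * pencil a);
   d ((pencil y) w) in direction (a,v) is pencil a * w + pencil y * v. *)
Definition jac_U (y w : 'cV[F]_5) : 'M[F]_(1 + 5, 5 + 5) :=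
  col_mx
    (row_mx (\matrix_(i < 1, k < 5) \tr (\adj (pencil y) *m A k)) 0)
    (row_mx (\matrix_(i < 5, k < 5) (A k *m w) i 0) (pencil y)).

(* U is smooth (of dimension 3 = dim U): at every point the Zariski tangent
   space of the scheme U has projective dimension 3. *)
Definition U_smooth : Prop :=
  forall y w, in_U y w -> \rank (jac_U y w) = 5%N.

End Web.

From mathcomp Require Import all_boot all_order all_algebra.
Import GRing.Theory.
Local Open Scope ring_scope.
Set Implicit Arguments. Unset Strict Implicit.

(* Let (y, w) be a point of U and P := pencil y.  Since P w = 0 and
   P (adj P) = det P = 0, either adj P = 0 or P has corank one; in both cases
   adj P = w d for a row vector d, and d P = 0 because (adj P) P = 0.  The
   derivative tr (adj P * pencil y') of det at y is then d (pencil y') w, so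
   the Jacobian of U has rows d B and B, where B := [y' |-> pencil y' w | P],
   and rank jac_U = rank B.  A nonzero u with u B = 0 would give a point
   (u, w) of X~ at which y^T annihilates the Jacobian of X~ from the left,
   against the smoothness of X~. *)

Section MatrixFacts.
Variable F : fieldType.

Lemma row_free_mul0P m n (B : 'M[F]_(m, n)) :
  reflect (forall u : 'rV_m, u *m B = 0 -> u = 0) (row_free B).
Proof.
rewrite -kermx_eq0; apply: (iffP eqP) => [kB0 u /sub_kermxP | uB0].
  by rewrite kB0 submx0 => /eqP.
by apply/eqP; rewrite -nz_row_eq0; apply/eqP/uB0/sub_kermxP/nz_row_sub.
Qed.

Lemma mul_cV_rV_eq0 n p (w : 'cV[F]_n) (x : 'rV[F]_p) :
  w != 0 -> w *m x = 0 -> x = 0.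
Proof.
move=> w0 wx; apply: trmx_inj; apply: (@row_free_inj _ _ _ _ w^T).
  by rewrite /row_free rank_rV trmx_eq0 w0.
by rewrite -trmx_mul wx !trmx0 mul0mx.
Qed.

Lemma mxrank_mxsub m n m' n' f g (X : 'M[F]_(m, n)) :
  (\rank (mxsub f g X : 'M_(m', n')) <= \rank X)%N.
Proof.
have -> : mxsub f g X = rowsub f 1%:M *m X *m colsub g 1%:M.
  rewrite mulmx_colsub mulmx1 mul_rowsub_mx mul1mx.
  by apply/matrixP => i j; rewrite !mxE.
exact: leq_trans (mxrankM_maxl _ _) (mxrankM_maxr _ _).
Qed.

Lemma mxrank_col_mulmx m n p (d : 'M[F]_(m, n)) (B : 'M[F]_(n, p)) :
  \rank (col_mx (d *m B) B) = \rank B.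
Proof. by rewrite -addsmxE; have /addsmx_idPr -> := submxMl d B. Qed.

Lemma adj_eq0 n (P : 'M[F]_n.+1) : (\rank P < n)%N -> \adj P = 0.
Proof.
move=> rP; apply/matrixP => i j; rewrite !mxE /cofactor.
apply/eqP; rewrite mulf_eq0 orbC; apply/orP; left; apply/eqP.
apply: contraTeq rP => minor_nz; rewrite -leqNgt.
have minorE : row' j (col' i P) = mxsub (lift j) (lift i) P.
  by apply/matrixP => a b; rewrite !mxE.
have /mxrank_unit/= rk : row' j (col' i P) \in unitmx by rewrite unitmxE unitfE.
by rewrite -[n in (n <= _)%N]rk minorE mxrank_mxsub.
Qed.

Lemma adj_factor_ker n (P : 'M[F]_n.+1) (w : 'cV_n.+1) :
  \det P = 0 -> w != 0 -> P *m w = 0 -> exists d : 'rV_n.+1, \adj P = w *m d.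
Proof.
move=> detP w0 Pw; have [rP | rP] := ltnP (\rank P) n.
  by exists 0; rewrite adj_eq0 // mulmx0.
have {}rP : \rank P = n.
  have : ~~ row_free P by rewrite row_free_unit unitmxE detP unitr0.
  rewrite /row_free eqn_leq rank_leq_row -ltnNge ltnS => rP'.
  by apply/eqP; rewrite eqn_leq rP rP'.
have wK : (w^T <= kermx P^T)%MS by apply/sub_kermxP; rewrite -trmx_mul Pw trmx0.
have adjK : ((\adj P)^T <= kermx P^T)%MS.
  by apply/sub_kermxP; rewrite -trmx_mul mul_mx_adj detP raddf0 trmx0.
have Kw : (kermx P^T <= w^T)%MS.
  rewrite -(mxrank_leqif_sup wK).2 mxrank_ker mxrank_tr rP subSnn.
  by rewrite rank_rV trmx_eq0 w0.
have /submxP [D adjE] := submx_trans adjK Kw.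
by exists D^T; rewrite -[LHS]trmxK adjE trmx_mul trmxK.
Qed.

End MatrixFacts.

Section Web.
Variables (F : fieldType) (A : 'I_5 -> 'M[F]_5).

Definition pencil_eval (w : 'cV[F]_5) : 'M[F]_5 :=
  \matrix_(i, k) (A k *m w) i 0.

Lemma pencil_evalE y w : pencil_eval w *m y = pencil A y *m w.
Proof.
apply/matrixP => i a; rewrite (ord1 a) [LHS]mxE /pencil mulmx_suml summxE.
by apply: eq_bigr => k _; rewrite -scalemxAl !mxE mulrC.
Qed.

Lemma mul_rV_pencil_eval (d : 'rV[F]_5) w k :
  (d *m pencil_eval w) 0 k = (d *m A k *m w) 0 0.
Proof. by rewrite -mulmxA !mxE; apply: eq_bigr => i _; rewrite !mxE. Qed.

Lemma mul_jac_Xt z w y :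
  y^T *m jac_Xt A z w = row_mx (pencil A y *m w)^T (z^T *m pencil A y).
Proof.
rewrite mul_mx_row -pencil_evalE trmx_mul; congr (row_mx (_ *m _) _).
  by apply/matrixP => k j; rewrite !mxE.
apply/matrixP => a j; rewrite (ord1 a) /pencil mulmx_sumr summxE !mxE.
by apply: eq_bigr => k _; rewrite -scalemxAr !mxE mulrC.
Qed.

Lemma in_Xt_left_ker (u : 'rV[F]_5) (w : 'cV[F]_5) :
  u != 0 -> w != 0 -> u *m pencil_eval w = 0 -> in_Xt A u^T w.
Proof.
move=> u0 w0 uE; split; first by rewrite trmx_eq0.
by split=> // k; rewrite trmxK -mul_rV_pencil_eval uE mxE.
Qed.

Lemma row_free_pencil_jac y w :
  (forall z w, in_Xt A z w -> \rank (jac_Xt A z w) = 5%N) ->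
  y != 0 -> w != 0 -> pencil A y *m w = 0 ->
  row_free (row_mx (pencil_eval w) (pencil A y)).
Proof.
move=> Xt_rank y0 w0 Pw; apply/row_free_mul0P => u.
rewrite mul_mx_row -row_mx0 => /eq_row_mx [uE uP].
apply/eqP; apply: contraT => u0.
have /row_free_mul0P free_jac : row_free (jac_Xt A u^T w).
  by rewrite /row_free Xt_rank //; apply: in_Xt_left_ker.
have yT0 : y^T = 0.
  by apply: free_jac; rewrite mul_jac_Xt Pw trmxK uP trmx0 row_mx0.
by move: y0; rewrite -trmx_eq0 yT0 eqxx.
Qed.

Lemma jac_U_factor y w : in_U A y w ->
  exists d : 'rV_5, jac_U A y w =
    col_mx (d *m row_mx (pencil_eval w) (pencil A y))
           (row_mx (pencil_eval w) (pencil A y)).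
Proof.
move=> [[_ detP] [w0 Pw]]; have [d adjE] := adj_factor_ker detP w0 Pw.
have dP : d *m pencil A y = 0.
  apply: (mul_cV_rV_eq0 w0).
  by rewrite mulmxA -adjE mul_adj_mx detP raddf0.
exists d; rewrite mul_mx_row dP; congr (col_mx (row_mx _ _) _).
apply/matrixP => a k; rewrite (ord1 a) mxE mul_rV_pencil_eval adjE.
by rewrite mxtrace_mulC mulmxA mxtrace_mulC trace_mx11 mulmxA.
Qed.

End Web.

Theorem claim3p7 (A : 'I_5 -> 'M[CC]_5) :
  (forall i, (A i)^T = A i) ->
  (forall c : 'I_5 -> CC, \sum_(i < 5) c i *: A i = 0 -> forall i, c i = 0) ->
  Xt_smooth_threefold A ->
  U_smooth A.
Proof.
move=> _ _ [_ Xt_rank] y w Uyw.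
have [d ->] := jac_U_factor Uyw; rewrite mxrank_col_mulmx.
by case: Uyw => [[y0 _] [w0 Pw]]; apply/eqP/row_free_pencil_jac.
Qed.
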